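(* Let $0<\alpha<n$ and $b$ be locally integrable on $\mathbb{Q}_p^n$. If for some $q(\cdot)\in\mathscr{B}(\mathbb{Q}_p^n)$ there is $C>0$ with $$\sup_{\gamma\in\mathbb{Z},x\in\mathbb{Q}_p^n}\frac{\big\|\big(b-|B_\gamma(x)|_h^{-\alpha/n}\mathcal{M}^p_{\alpha,B_\gamma(x)}(b)\big)\chi_{B_\gamma(x)}\big\|_{L^{q(\cdot)}(\mathbb{Q}_p^n)}}{\|\chi_{B_\gamma(x)}\|_{L^{q(\cdot)}(\mathbb{Q}_p^n)}}\le C,$$ then $b\in\mathrm{BMO}(\mathbb{Q}_p^n)$.
   Context: Fix a prime $p$; $\mathbb{Q}_p^n$ with $|x|_p=\max_j|x_j|_p$; balls $B_\gamma(x)=\{y:|y-x|_p\le p^\gamma\}$; Haar measure with $|B_\gamma(x)|_h=p^{n\gamma}$; $\chi_E$ indicator; $f_B=|B|_h^{-1}\int_Bf$. For a fixed ball $B_*$ and $x\in B_*$, $\mathcal{M}^p_{\alpha,B_*}(f)(x)=\sup\{|B_\gamma(x)|_h^{\alpha/n-1}\int_{B_\gamma(x)}|f|:\gamma\in\mathbb{Z},B_\gamma(x)\subset B_*\}$. $\mathrm{BMO}$: locally integrable $b$ with $\sup_{\gamma,x}|B_\gamma(x)|_h^{-1}\int_{B_\gamma(x)}|b-b_{B_\gamma(x)}|<\infty$. $\mathscr{P}(\mathbb{Q}_p^n)$: measurable $q:\mathbb{Q}_p^n\to(1,\infty)$ with $1<\operatorname{ess\,inf}q\le\operatorname{ess\,sup}q<\infty$.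 $L^{q(\cdot)}$ is normed by $\|f\|_{L^{q(\cdot)}}=\inf\{\eta>0:\int(|f(x)|/\eta)^{q(x)}dx\le1\}$. $\mathscr{B}(\mathbb{Q}_p^n)$ is the set of $q(\cdot)\in\mathscr{P}(\mathbb{Q}_p^n)$ such that the Hardy–Littlewood maximal operator $\mathcal{M}^p(f)(x)=\sup_{\gamma}|B_\gamma(x)|_h^{-1}\int_{B_\gamma(x)}|f|$ is bounded on $L^{q(\cdot)}(\mathbb{Q}_p^n)$. *)

From HB Require Import structures.
From mathcomp Require Import all_boot all_order all_algebra.
From mathcomp Require Import all_classical all_reals all_analysis.
From mathcomp Require Import measurable_realfun.
Set Implicit Arguments. Unset Strict Implicit. Unset Printing Implicit Defensive.
Import Order.TTheory GRing.Theory Num.Theory.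
Local Open Scope classical_set_scope.
Local Open Scope ring_scope.

(* The p-adic numbers Q_p, represented by their (unique) canonical p-adic  *)
(* expansion  x = sum_{k in Z} a_k p^k  with digits a_k in {0,...,p-1} and *)
(* a_k = 0 for all sufficiently negative k.                               *)
Definition Qp (p : nat) : Type :=
  {a : int -> nat | (forall k, (a k <= p.-1)%N) /\
                    exists N : int, forall k, k < N -> a k = 0%N}.

Definition Qp_digit (p : nat) (x : Qp p) : int -> nat := proj1_sig x.

Lemma Qp_zero_proof (p : nat) :
  (forall k : int, ((fun _ : int => 0%N) k <= p.-1)%N) /\
  exists N : int, forall k, k < N -> (fun _ : int => 0%N) k = 0%N.
Proof. by split=> //; exists 0. Qed.

Definition Qp_zero (p : nat) : Qp p := exist _ (fun _ => 0%N) (Qp_zero_proof p).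

HB.instance Definition _ (p : nat) := gen_eqMixin (Qp p).
HB.instance Definition _ (p : nat) := gen_choiceMixin (Qp p).
HB.instance Definition _ (p : nat) := isPointed.Build (Qp p) (Qp_zero p).

Definition Qpn (p n : nat) : Type := 'I_n -> Qp p.

(* The ball B_gamma(x) = {y : |y - x|_p <= p^gamma}, |.|_p the max-norm.  *)
(* For the p-adic norm one has |y_j - x_j|_p <= p^gamma iff the p-adic    *)
(* expansions of x_j and y_j agree at every index k < -gamma.             *)
Definition ball_p (p n : nat) (g : int) (x : Qpn p n) : set (Qpn p n) :=
  [set y | forall (j : 'I_n) (k : int), k < - g ->
           Qp_digit (y j) k = Qp_digit (x j) k].

Definition balls_p (p n : nat) : set (set (Qpn p n)) :=
  [set B | exists g x, B = ball_p g x].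

(* Q_p^n with its Borel sigma-algebra (generated by the balls). *)
Definition QpnM (p n : nat) := g_sigma_algebraType (@balls_p p n).

(* Haar measure of a ball: |B_gamma(x)|_h = p^(n gamma). *)
Definition vol_p {R : realType} (p n : nat) (g : int) : R :=
  (p%:R : R) ^ (n%:Z * g).

Section Defs.
Context {R : realType} (p n : nat).
Notation T := (QpnM p n).
Variable mu : {measure set T -> \bar R}.

Definition ballM (g : int) (x : T) : set T := ball_p (p:=p) (n:=n) g x.

(* locally integrable: integrable on every ball (balls are compact open and
   every compact set is covered by finitely many balls) *)
Definition loc_integrable (b : T -> R) : Prop :=
  forall g x, mu.-integrable (ballM g x) (EFin \o b).

Definition var_exponent (q : T -> R) : Prop :=
  measurable_fun setT q /\ (forall x, 1 < q x) /\
  exists qm qM : R, 1 < qm /\ {ae mu, forall x, qm <= q x <= qM}.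

(* Luxemburg norm ||f||_{L^{q(.)}} (value +oo if no eta works) *)
Definition lq_norm (q : T -> R) (f : T -> \bar R) : \bar R :=
  ereal_inf [set (eta%:E)%E | eta in [set eta : R | 0 < eta /\
     (\int[mu]_x poweR (`|f x| * (eta^-1)%:E)%E (q x) <= 1)%E]].

Definition HLmax (f : T -> \bar R) (x : T) : \bar R :=
  ereal_sup [set ((vol_p (R:=R) p n g)^-1%:E *
                  \int[mu]_(y in ballM g x) `|f y|)%E | g in [set: int]].

Definition in_B (q : T -> R) : Prop :=
  var_exponent q /\
  exists C : R, 0 < C /\
    forall f : T -> R, measurable_fun [set: T] f ->
      (lq_norm q (EFin \o f) < +oo)%E ->
      (lq_norm q (HLmax (EFin \o f)) <= C%:E * lq_norm q (EFin \o f))%E.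

Definition fracmax (alpha : R) (Bs : set T) (f : T -> R) (x : T) : \bar R :=
  ereal_sup [set ((powR (vol_p (R:=R) p n g) (alpha / n%:R - 1))%:E *
                  \int[mu]_(y in ballM g x) (`|f y|)%:E)%E
            | g in [set g : int | ballM g x `<=` Bs]].

Definition osc_fun (alpha : R) (b : T -> R) (g : int) (x : T) : T -> \bar R :=
  fun y => if `[< ballM g x y >] then
      ((b y)%:E - (powR (vol_p (R:=R) p n g) (- (alpha / n%:R)))%:E
                    * fracmax alpha (ballM g x) b y)%E
    else 0%E.

Definition indic_ball (g : int) (x : T) : T -> \bar R :=
  fun y => (\1_(ballM g x) y)%:E.

Definition ball_avg (b : T -> R) (g : int) (x : T) : R :=
  (vol_p (R:=R) p n g)^-1 * fine (\int[mu]_(y in ballM g x) (b y)%:E).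

Definition in_BMO (b : T -> R) : Prop :=
  loc_integrable b /\
  exists K : R, forall (g : int) (x : T),
    ((vol_p (R:=R) p n g)^-1%:E *
      \int[mu]_(y in ballM g x) (`|b y - ball_avg b g x|)%:E <= K%:E)%E.

End Defs.

(* For y in a ball B the ball B itself is admissible in M_{alpha,B}(b)(y), so
   |B|^(-alpha/n) M_{alpha,B}(b)(y) >= |B|^-1 \int_B |b| >= b_B; hence the
   negative part (b - b_B)^- is dominated on B by the oscillation function.
   As b - b_B has mean zero on B, \int_B |b - b_B| = 2 \int_B (b - b_B)^-.
   Finally, for h supported in B, (avg_B h) chi_B <= M(h) pointwise, so the
   boundedness of M on L^q(.) gives (avg_B h) ||chi_B|| <= C_M ||h||
   <= C_M C ||chi_B||, i.e. avg_B |b - b_B| <= 2 C_M C. *)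

From HB Require Import structures.
From mathcomp Require Import all_boot all_order all_algebra.
From mathcomp Require Import all_classical all_reals all_analysis.
From mathcomp Require Import measurable_realfun.
Import Order.TTheory GRing.Theory Num.Theory.
Local Open Scope classical_set_scope.
Local Open Scope ring_scope.

Section balls.
Context {R : realType} {p n : nat}.
Notation T := (QpnM p n).

Lemma ballM_recenter {g : int} {x y : T} : ballM g x y -> ballM g y = ballM g x.
Proof. by move=> xy; apply/seteqP; split=> z /= xz j k kg; rewrite xz // xy. Qed.

Lemma measurable_ballM (g : int) (x : T) : measurable (ballM g x).
Proof. by apply: sub_sigma_algebra; exists g, x. Qed.

Lemma vol_p_gt0 (g : int) : (0 < p)%N -> 0 < vol_p (R:=R) p n g.
Proof. by move=> p0; rewrite /vol_p exprz_gt0 // ltr0n. Qed.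

End balls.

Local Open Scope ereal_scope.

Section nonneg_integral.
Context {d : measure_display} {T : measurableType d} {R : realType}.
Variable mu : {measure set T -> \bar R}.

Lemma ge0_le_integral_nonmeasurable (D : set T) (f g : T -> \bar R) :
  (forall x, D x -> 0 <= f x) -> (forall x, D x -> f x <= g x) ->
  \int[mu]_(x in D) f x <= \int[mu]_(x in D) g x.
Proof.
move=> f0 fg; have g0 x (Dx : D x) := le_trans (f0 x Dx) (fg x Dx).
rewrite (ge0_integralE _ f0) (ge0_integralE _ g0).
apply: ereal_sup_le => _ [h hf <-]; exists h => //= x.
apply: (le_trans (hf x)); rewrite /patch; case: ifP => // /set_mem; exact: fg.
Qed.

Lemma integral_abse_mean0 (D : set T) (F : T -> \bar R) : measurable D ->
  mu.-integrable D F -> \int[mu]_(x in D) F x = 0 ->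
  \int[mu]_(x in D) `|F x| = \int[mu]_(x in D) F^\- x + \int[mu]_(x in D) F^\- x.
Proof.
move=> mD iF F0; have mF : measurable_fun D F by case/integrableP: iF.
have Nfin : \int[mu]_(x in D) F^\- x \is a fin_num.
  rewrite ge0_fin_numE ?integral_funeneg_lt_pinfty //.
  by apply: integral_ge0 => x _; exact: funeneg_ge0.
have PN : \int[mu]_(x in D) F^\+ x = \int[mu]_(x in D) F^\- x.
  by rewrite -[LHS](subeK _ Nfin) -integralE F0 add0e.
rewrite -[X in X + _]PN -ge0_integralD //; last 2 first.
- exact: measurable_funepos.
- exact: measurable_funeneg.
by apply: eq_integral => x _; rewrite -/((abse \o F) x) fune_abse.
Qed.

End nonneg_integral.

Section lq_norm.
Context {R : realType} {p n : nat}.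
Notation T := (QpnM p n).
Variables (mu : {measure set T -> \bar R}) (q : T -> R).
Hypothesis q_ge1 : forall x, (1 <= q x)%R.

Let invEFin_ge0 (eta : R) : (0 < eta)%R -> 0 <= eta^-1%:E.
Proof. by move=> eta0; rewrite lee_fin invr_ge0 ltW. Qed.

Lemma lq_norm_ge0 (f : T -> \bar R) : 0 <= lq_norm mu q f.
Proof. by apply: le_ereal_inf_tmp => _ [eta [eta0 _] <-]; rewrite lee_fin ltW. Qed.

Lemma le_lq_norm (f g : T -> \bar R) : (forall x, `|f x| <= `|g x|) ->
  lq_norm mu q f <= lq_norm mu q g.
Proof.
move=> fg; apply: ereal_inf_le_tmp => _ [eta [eta0 geta] <-]; exists eta => //.
split=> //; apply: le_trans geta; apply: ge0_le_integral_nonmeasurable => y _.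
  by rewrite poweR_ge0 // mule_ge0 // invEFin_ge0.
apply: gt0_ler_poweR; first by rewrite (le_trans ler01).
- by rewrite in_itv /= leey mule_ge0 // invEFin_ge0.
- by rewrite in_itv /= leey mule_ge0 // invEFin_ge0.
by rewrite lee_wpmul2r // invEFin_ge0.
Qed.

Lemma lq_normZ_ge (c : R) (f : T -> \bar R) : (0 < c)%R ->
  c%:E * lq_norm mu q f <= lq_norm mu q (fun y => c%:E * f y).
Proof.
move=> c0; apply: le_ereal_inf_tmp => _ [eta [eta0 geta] <-].
have : lq_norm mu q f <= (eta / c)%:E.
  apply: ereal_inf_lbound; exists (eta / c)%R; last by [].
  split; first by rewrite divr_gt0.
  apply: le_trans geta; rewrite le_eqVlt; apply/orP; left; apply/eqP.
  apply: eq_integral => y _; congr poweR.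
  rewrite abseM (@gee0_abs _ c%:E) ?lee_fin ?ltW // [c%:E * _]muleC -muleA.
  by rewrite -EFinM invf_div mulrC.
move/(lee_wpmul2l (x := c%:E)); rewrite lee_fin ltW // => /(_ isT).
by rewrite -EFinM mulrC divfK // gt_eqF.
Qed.

Section lq_norm_indic_ball.
Hypothesis hmu : forall g x, mu (ballM g x) = (vol_p (R:=R) p n g)%:E.
Hypothesis p_gt0 : (0 < p)%N.
Local Notation V g := (vol_p (R:=R) p n g).
Local Notation N g x := (lq_norm mu q (indic_ball (p:=p) (n:=n) g x)).

Let integral_indic_ballZ g x (e : R) : (0 <= e)%R ->
  \int[mu]_y ((e * \1_(ballM g x) y)%:E) = (e * V g)%:E.
Proof.
move=> e0; under eq_integral do rewrite EFinM.
rewrite ge0_integralZl_EFin //; last first.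
  by apply/measurable_EFinP/measurable_indic; exact: measurable_ballM.
by rewrite integral_indic ?setIT ?hmu //; exact: measurable_ballM.
Qed.

Let indic_ball_powE g x y (eta : R) : (0 < eta)%R ->
  poweR (`|indic_ball g x y| * eta^-1%:E) (q y) =
  ((\1_(ballM g x) y : R) * eta^-1 `^ q y)%:E.
Proof.
move=> eta0; rewrite /indic_ball indicE gee0_abs ?lee_fin //.
case: (y \in _); rewrite ?mul1e ?mul0e ?mul1r ?mul0r poweR_EFin //.
by rewrite powR0 // gt_eqF // (lt_le_trans ltr01).
Qed.

Lemma lq_norm_indic_ball_le g x : N g x <= (Num.max 1%R (V g))%:E.
Proof.
set eta := Num.max 1%R (V g).
have eta1 : (1 <= eta)%R by rewrite le_max lexx.
have eta0 : (0 < eta)%R by rewrite (lt_le_trans ltr01).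
apply: ereal_inf_lbound; exists eta => //; split => //.
apply: (@le_trans _ _ (\int[mu]_y ((eta^-1 * \1_(ballM g x) y : R)%:E))).
  apply: ge0_le_integral_nonmeasurable => y _; rewrite indic_ball_powE //.
    by rewrite lee_fin mulr_ge0 ?powR_ge0.
  rewrite lee_fin mulrC ler_wpM2r //.
  by rewrite ge1r_powR ?invr_gt0 ?invf_le1 ?eta0.
rewrite integral_indic_ballZ ?invr_ge0 ?(ltW eta0) // lee_fin.
by rewrite ler_pdivrMl // mulr1 le_max lexx orbT.
Qed.

Lemma lq_norm_indic_ball_ge g x : (Num.min 1%R (V g))%:E <= N g x.
Proof.
apply: le_ereal_inf_tmp => _ [eta [eta0 Ieta] <-]; rewrite lee_fin.
rewrite leNgt lt_min; apply/negP => /andP[eta1 etaV].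
suff : ((eta^-1 * V g)%:E <= 1) by rewrite lee_fin ler_pdivrMl // mulr1 leNgt etaV.
apply: le_trans Ieta; rewrite -(integral_indic_ballZ g x) ?invr_ge0 ?(ltW eta0) //.
apply: ge0_le_integral_nonmeasurable => y _.
  by rewrite lee_fin mulr_ge0 // invr_ge0 ltW.
rewrite indic_ball_powE // lee_fin mulrC ler_wpM2l //.
by rewrite le1r_powR // invf_ge1 // ltW.
Qed.

Lemma lq_norm_indic_ball_fin_num g x : N g x \is a fin_num.
Proof.
rewrite ge0_fin_numE ?lq_norm_ge0 //.
exact: le_lt_trans (lq_norm_indic_ball_le g x) (ltey _).
Qed.

Lemma lq_norm_indic_ball_gt0 g x : (0 < fine (N g x))%R.
Proof.
rewrite -lte_fin fineK ?lq_norm_indic_ball_fin_num //.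
apply: lt_le_trans (lq_norm_indic_ball_ge g x).
by rewrite lte_fin lt_min ltr01 vol_p_gt0.
Qed.

End lq_norm_indic_ball.

End lq_norm.

Lemma lee_fin_of_lbounds {R : realType} (a : \bar R) (K : R) : (0 <= K)%R ->
  0 <= a -> (forall c : R, (0 < c)%R -> c%:E <= a -> (c <= K)%R) -> a <= K%:E.
Proof.
move=> K0; case: a => [r||] //= r0 aK.
  rewrite lee_fin; have [r_gt0|r_le0] := ltP 0%R r; first exact: aK.
  exact: le_trans r_le0 K0.
by have := aK (K + 1)%R (ltr_pwDr ltr01 K0) (leey _); rewrite gerDl ler10.
Qed.

Section maximal_average.
Context {R : realType} {p n : nat}.
Notation T := (QpnM p n).
Variables (mu : {measure set T -> \bar R}) (q : T -> R) (CM : R).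
Hypothesis q_ge1 : forall x, (1 <= q x)%R.
Hypothesis hmu : forall g x, mu (ballM g x) = (vol_p (R:=R) p n g)%:E.
Hypothesis p_gt0 : (0 < p)%N.
Hypothesis CM_gt0 : (0 < CM)%R.
Hypothesis HLmax_bounded : forall f : T -> R, measurable_fun [set: T] f ->
  lq_norm mu q (EFin \o f) < +oo ->
  lq_norm mu q (HLmax mu (EFin \o f)) <= CM%:E * lq_norm mu q (EFin \o f).
Local Notation V g := (vol_p (R:=R) p n g).
Local Notation N g x := (lq_norm mu q (indic_ball (p:=p) (n:=n) g x)).

Lemma ball_average_le_HLmax (f : T -> \bar R) g x y : ballM g x y ->
  (V g)^-1%:E * \int[mu]_(z in ballM g x) `|f z| <= HLmax mu f y.
Proof. by move=> xy; apply: ereal_sup_ubound; exists g; rewrite //= (ballM_recenter xy). Qed.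

Lemma ball_average_le (f : T -> R) (K : R) g x : (0 < K)%R ->
  measurable_fun [set: T] f -> lq_norm mu q (EFin \o f) <= K%:E * N g x ->
  (V g)^-1%:E * \int[mu]_(z in ballM g x) `|(f z)%:E| <= (CM * K)%:E.
Proof.
move=> K0 mf fK.
have Nfin := lq_norm_indic_ball_fin_num mu q q_ge1 hmu g x.
have ffin : lq_norm mu q (EFin \o f) < +oo.
  by apply: le_lt_trans fK _; rewrite -(fineK Nfin) -EFinM ltey.
apply: lee_fin_of_lbounds; first by rewrite mulr_ge0 ?ltW.
  by rewrite mule_ge0 ?integral_ge0 // lee_fin invr_ge0 ltW ?vol_p_gt0.
move=> c c0 cA.
have cM : lq_norm mu q (fun y => c%:E * indic_ball g x y) <=
          lq_norm mu q (HLmax mu (EFin \o f)).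
  apply: le_lq_norm => // y; rewrite /indic_ball indicE.
  case: (boolP (y \in ballM g x)) => [/set_mem xy|_]; last by rewrite mule0 abse0.
  rewrite mule1 gee0_abs ?lee_fin ?(ltW c0) //.
  apply: le_trans cA (le_trans _ (lee_abs _)); exact: ball_average_le_HLmax.
have := le_trans (lq_normZ_ge mu q c (indic_ball g x) c0)
  (le_trans cM (le_trans (HLmax_bounded f mf ffin) (lee_wpmul2l (ltW _) fK))).
rewrite lte_fin CM_gt0 -(fineK Nfin) muleA -!EFinM lee_fin => /(_ isT).
by rewrite ler_pM2r ?(lq_norm_indic_ball_gt0 mu q q_ge1 hmu p_gt0).
Qed.

End maximal_average.

Section oscillation.
Context {R : realType} {p n : nat}.
Notation T := (QpnM p n).
Variables (mu : {measure set T -> \bar R}) (alpha : R) (b : T -> R).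
Hypothesis hmu : forall g x, mu (ballM g x) = (vol_p (R:=R) p n g)%:E.
Hypothesis p_gt0 : (0 < p)%N.
Hypothesis hb : loc_integrable mu b.
Local Notation V g := (vol_p (R:=R) p n g).
Local Notation J g x := (\int[mu]_(z in ballM g x) (`|b z|)%:E).

Let J_fin_num g x : J g x \is a fin_num.
Proof.
rewrite ge0_fin_numE ?integral_ge0 //.
by case/integrableP: (hb g x) => _; under eq_integral do rewrite /= -abse_EFin.
Qed.

Lemma ball_avg_le_mean_abs g x : (ball_avg mu b g x <= (V g)^-1 * fine (J g x))%R.
Proof.
have V0 := vol_p_gt0 (R:=R) (n:=n) g p_gt0.
rewrite /ball_avg ler_wpM2l ?invr_ge0 ?(ltW V0) //.
have mB := measurable_ballM g x.
rewrite -lee_fin !fineK ?J_fin_num ?(integrable_fin_num mB (hb g x)) //.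
apply: le_trans (lee_abs _) _; under [X in _ <= X]eq_integral do rewrite -abse_EFin.
by apply: le_abse_integral => //; case/integrableP: (hb g x).
Qed.

Lemma mean_abs_le_fracmax g x y : ballM g x y ->
  ((V g `^ (alpha / n%:R - 1) * fine (J g x))%:E <=
   fracmax mu alpha (ballM g x) b y).
Proof.
move=> xy; apply: ereal_sup_ubound; exists g; first by rewrite /= (ballM_recenter xy).
by rewrite /= (ballM_recenter xy) EFinM fineK ?J_fin_num.
Qed.

Lemma ball_avg_sub_le_osc_fun g x y : ballM g x y ->
  (ball_avg mu b g x - b y)%:E <= `|osc_fun mu alpha b g x y|.
Proof.
move=> xy; have V0 := vol_p_gt0 (R:=R) (n:=n) g p_gt0.
have powVE : (V g `^ (- (alpha / n%:R)) * V g `^ (alpha / n%:R - 1) = (V g)^-1)%R.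
  by rewrite -powRD ?(gt_eqF V0) ?implybT // addrA addNr add0r powR_inv1 ?(ltW V0).
have P0 : (0 < V g `^ (- (alpha / n%:R)))%R by rewrite powR_gt0.
have := @mean_abs_le_fracmax g x y xy; rewrite /osc_fun asboolT //.
case: (fracmax _ _ _ _ _) => [r||] Jr.
- rewrite -EFinM -EFinB lee_fin ler_normr opprB lerD2r orbC.
  apply/orP; left; apply: le_trans (ball_avg_le_mean_abs g x) _.
  by rewrite -powVE -mulrA ler_wpM2l ?(ltW P0).
- by rewrite gt0_muley ?lte_fin //= leey.
- by move: Jr; rewrite leeNy_eq.
Qed.

Let integrable_ball_avg g x :
  mu.-integrable (ballM g x) (fun=> (ball_avg mu b g x)%:E).
Proof.
apply/integrableP; split; first exact: measurable_cst.
by rewrite (integral_cst mu (measurable_ballM g x)) hmu -EFinM ltey.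
Qed.

Lemma integral_sub_ball_avg g x :
  \int[mu]_(z in ballM g x) ((b z)%:E - (ball_avg mu b g x)%:E) = 0.
Proof.
have mB := measurable_ballM g x.
rewrite (integralB_EFin mB (hb g x) (integrable_ball_avg g x)) integral_cst // hmu.
rewrite -EFinM /ball_avg mulrC mulrA divff ?gt_eqF ?vol_p_gt0 // mul1r.
by rewrite fineK ?subee ?(integrable_fin_num mB (hb g x)).
Qed.

Definition ball_negdev (g : int) (x : T) : T -> R :=
  (fun y => Num.max (ball_avg mu b g x - b y)%R 0%R) \_ (ballM g x).

Lemma ball_negdev_ge0 g x y : (0 <= ball_negdev g x y)%R.
Proof. by rewrite /ball_negdev /patch; case: ifP; rewrite // le_max lexx orbT. Qed.

Lemma measurable_ball_negdev g x : measurable_fun setT (ball_negdev g x).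
Proof.
apply/(measurable_restrictT _ (measurable_ballM g x))/measurable_maxr => //.
apply: measurable_funB => //; apply/measurable_EFinP.
by case/integrableP: (hb g x).
Qed.

Lemma ball_negdev_le_osc_fun g x y :
  `|(ball_negdev g x y)%:E| <= `|osc_fun mu alpha b g x y|.
Proof.
rewrite /ball_negdev /patch; case: ifPn => [/set_mem xy | _] /=.
  rewrite ger0_norm ?le_max ?lexx ?orbT // EFin_max ge_max abse_ge0 andbT.
  exact: ball_avg_sub_le_osc_fun.
by rewrite normr0 abse_ge0.
Qed.

Lemma integral_abs_sub_ball_avg g x :
  \int[mu]_(z in ballM g x) (`|b z - ball_avg mu b g x|)%:E =
  \int[mu]_(z in ballM g x) `|(ball_negdev g x z)%:E| +
  \int[mu]_(z in ballM g x) `|(ball_negdev g x z)%:E|.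
Proof.
have mB := measurable_ballM g x.
have iF := integrableB mB (hb g x) (integrable_ball_avg g x).
transitivity (\int[mu]_(z in ballM g x) `|(b z)%:E - (ball_avg mu b g x)%:E|).
  by apply: eq_integral => z _; rewrite -EFinB abse_EFin.
rewrite (integral_abse_mean0 mu _ _ mB iF (integral_sub_ball_avg g x)).
suff -> : \int[mu]_(z in ballM g x) ((fun z => (b z)%:E - (ball_avg mu b g x)%:E)^\- z) =
  \int[mu]_(z in ballM g x) `|(ball_negdev g x z)%:E| by [].
apply: eq_integral => z xz; rewrite /= ger0_norm ?ball_negdev_ge0 //.
by rewrite /ball_negdev /patch xz funenegE -EFinB -EFinN opprB EFin_max.
Qed.

End oscillation.

Local Close Scope ereal_scope.

Theorem mainTheorem12 (R : realType) (p n : nat) (hp : prime p)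
  (mu : {measure set (QpnM p n) -> \bar R})
  (hmu : forall (g : int) (x : QpnM p n),
           mu (ballM g x) = (vol_p (R:=R) p n g)%:E)
  (alpha : R) (halpha : 0 < alpha < n%:R)
  (b : QpnM p n -> R) (hb : loc_integrable mu b)
  (q : QpnM p n -> R) (hq : in_B mu q)
  (C : R) (hC : 0 < C)
  (hbound : forall (g : int) (x : QpnM p n),
     (lq_norm mu q (osc_fun mu alpha b g x)
        <= C%:E * lq_norm mu q (indic_ball g x))%E) :
  in_BMO mu b.
Proof.
have [[_ [q_gt1 _]] [CM [CM_gt0 HLmax_bounded]]] := hq.
have q_ge1 y : 1 <= q y := ltW (q_gt1 y).
have p_gt0 := prime_gt0 hp.
split=> //; exists (2 * (CM * C)) => g x.
have negdev_le_osc := ball_negdev_le_osc_fun mu alpha b p_gt0 hb g x.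
have negdev_lq := le_trans (le_lq_norm mu q q_ge1 _ _ negdev_le_osc) (hbound g x).
have avg_le := ball_average_le mu q CM q_ge1 hmu p_gt0 CM_gt0 HLmax_bounded
  _ _ _ _ hC (measurable_ball_negdev mu b hb g x) negdev_lq.
rewrite integral_abs_sub_ball_avg // ge0_muleDr ?integral_ge0 //.
by rewrite mulr_natl mulr2n EFinD leeD.
Qed.
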